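(* For every positive integer $n$ there exists a rooted tree with at most $n^{1.894}$ nodes that contains every binary rooted tree on $n$ nodes as a topological minor. Consequently, binary rooted trees on $n$ nodes admit an NCA labeling scheme with labels of at most $\lceil 1.894\log_2 n\rceil$ bits.
   Context: Trees are rooted and unordered, with edges directed from parent to child. The degree of a node is its number of children. A tree is binary if every node has at most two children. A rooted tree $T$ is a topological minor of a rooted tree $U$ if there is an injective map $f$ from the nodes of $T$ to the nodes of $U$ with $f(\mathsf{NCA}(u,v))=\mathsf{NCA}(f(u),f(v))$ for all nodes $u,v$ of $T$. Here $\mathsf{NCA}$ denotes the nearest common ancestor. Equivalently, $U$ contains as a subgraph a subdivision of $T$ that respects the root/edge directions. An NCA labeling scheme for a class of trees consists of an encoder and a decoder. The encoder assigns distinct binary strings (labels) to the nodes of each tree in the class. The decoder, given only the labels of two nodes $u,v$ of the same tree, outputs the label of $\mathsf{NCA}(u,v)$. *)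

From mathcomp Require Import all_boot.
From Stdlib Require Import Reals.
Set Implicit Arguments. Unset Strict Implicit. Unset Printing Implicit Defensive.

(* A rooted tree on a finite node type T is given by its parent map:
   par x = None iff x is the root, par x = Some p if p is the parent of x. *)

Definition up_iter (T : finType) (par : T -> option T) (k : nat) (x : T) : option T :=
  iter k (obind par) (Some x).

(* a is an ancestor of x (reflexive: every node is its own ancestor) *)
Definition ancestor (T : finType) (par : T -> option T) (a x : T) : Prop :=
  exists k, up_iter par k x = Some a.

(* par describes a rooted tree: exactly one root, and every node reaches
   the root after finitely many parent steps (hence no cycles, connected). *)
Definition is_rooted_tree (T : finType) (par : T -> option T) : Prop :=
  (exists r : T, forall x, par x = None <-> x = r) /\
  (forall x : T, exists k, up_iter par k x = None).

Definition children (T : finType) (par : T -> option T) (v : T) : {set T} :=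
  [set c | par c == Some v].

Definition is_binary (T : finType) (par : T -> option T) : Prop :=
  forall v : T, #|children par v| <= 2.

Definition is_nca (T : finType) (par : T -> option T) (u v w : T) : Prop :=
  ancestor par w u /\ ancestor par w v /\
  (forall a, ancestor par a u -> ancestor par a v -> ancestor par a w).

Definition top_minor (T U : finType) (parT : T -> option T) (parU : U -> option U) : Prop :=
  exists f : T -> U, injective f /\
    forall u v w : T, is_nca parT u v w -> is_nca parU (f u) (f v) (f w).

Definition log2 (x : R) : R := (ln x / ln 2)%R.

(* ceiling of a real: ceil x = - floor (- x), with floor y = up y - 1 *)
Definition Rceil (x : R) : Z := (1 - up (- x))%Z.

(* A binary tree with at most n nodes, more than 7n/10 of them, has a heavy
   path: always entering a child with more than 7n/10 nodes, it reaches a node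
   whose two subtrees have at most (n-1)/2 and 7n/10 nodes, and the path
   together with the subtrees hanging off it weighs at most about 3n/10.  So
   the universal tree U(n) is a spine that hosts such paths, ending in a node
   with children U((n-1)/2) and U(7n/10); a light tree goes into U(7n/10)
   below the spine.  For alpha = 125/66 < 1.894 the spine for weight m has at
   most m^alpha / (1 - 2^(1-alpha)) nodes, and the recurrence closes to
   |U(n)| <= n^alpha.
   Naming nodes by their root-to-node words over {0, 1}, embeddings preserve
   longest common prefixes, i.e. nearest common ancestors; a node is labelled
   by the position of its image in U(n), written with ceil(log2 |U(n)|) bits. *)

From mathcomp Require Import all_boot zify.
From Stdlib Require Import Reals Lra ZArith.
Set Implicit Arguments. Unset Strict Implicit. Unset Printing Implicit Defensive.

Open Scope R_scope.

Lemma Rpower_1_base y : Rpower 1 y = 1.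
Proof. by rewrite /Rpower ln_1 Rmult_0_r exp_0. Qed.

Section RealPower.

Variable a : R.
Hypothesis a_ge1 : 1 <= a.

(* Stdlib's [Rpower 0 a] is [1], hence the explicit value at [0]. *)
Definition powr (x : R) : R := if Rlt_dec 0 x then Rpower x a else 0.

Lemma powr_pos x : 0 < x -> powr x = Rpower x a.
Proof. by rewrite /powr; case: Rlt_dec. Qed.

Lemma powr0 : powr 0 = 0.
Proof. by rewrite /powr; case: Rlt_dec => // h; lra. Qed.

Lemma powr1 : powr 1 = 1.
Proof. by rewrite powr_pos ?Rpower_1_base; lra. Qed.

Lemma powr_ge0 x : 0 <= powr x.
Proof.
rewrite /powr; case: (Rlt_dec 0 x) => h; [exact/Rlt_le/exp_pos | exact: Rle_refl].
Qed.

Lemma powr_le x y : 0 <= x <= y -> powr x <= powr y.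
Proof.
move=> [x_ge0 le_xy]; case: (Rle_lt_or_eq_dec _ _ x_ge0) => [x_gt0|<-].
  by rewrite !powr_pos; [apply: Rle_Rpower_l; lra | lra | lra].
by rewrite powr0; apply: powr_ge0.
Qed.

Lemma powr_mul x y : 0 <= x -> 0 <= y -> powr (x * y) = powr x * powr y.
Proof.
move=> x_ge0 y_ge0.
case: (Rle_lt_or_eq_dec _ _ x_ge0) => [x_gt0|<-]; last by rewrite Rmult_0_l powr0 Rmult_0_l.
case: (Rle_lt_or_eq_dec _ _ y_ge0) => [y_gt0|<-]; last by rewrite Rmult_0_r powr0 Rmult_0_r.
rewrite !powr_pos ?Rpower_mult_distr //; exact: Rmult_lt_0_compat.
Qed.

Lemma powrE x : 0 < x -> powr x = x * Rpower x (a - 1).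
Proof.
by move=> x_gt0; rewrite powr_pos // -{2}(Rpower_1 _ x_gt0) -Rpower_plus; congr Rpower; ring.
Qed.

Lemma powr_le_id x : 0 <= x <= 1 -> powr x <= x.
Proof.
move=> [x_ge0 x_le1]; case: (Rle_lt_or_eq_dec _ _ x_ge0) => [x_gt0|<-]; last by rewrite powr0; lra.
have : Rpower x (a - 1) <= Rpower 1 (a - 1) by apply: Rle_Rpower_l; lra.
rewrite powrE // Rpower_1_base; nra.
Qed.

Lemma powr_ge_id x : 1 <= x -> x <= powr x.
Proof.
move=> x_ge1; have : Rpower 1 (a - 1) <= Rpower x (a - 1) by apply: Rle_Rpower_l; lra.
rewrite powrE ?Rpower_1_base; nra.
Qed.

(* Both summands are [powr (x + y)] times a power of a ratio at most [1]. *)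
Lemma powr_superadd x y : 0 <= x -> 0 <= y -> powr x + powr y <= powr (x + y).
Proof.
move=> x_ge0 y_ge0.
case: (Rle_lt_or_eq_dec _ _ (Rplus_le_le_0_compat _ _ x_ge0 y_ge0)) => [s_gt0|s_eq0].
- have ratio z : 0 <= z <= x + y -> powr z <= powr (x + y) * (z / (x + y)).
    move=> [z_ge0 z_le].
    have inv_gt0 := Rinv_0_lt_compat _ s_gt0.
    have inv_r : (x + y) * / (x + y) = 1 by field; lra.
    have r_ge0 : 0 <= z / (x + y) by apply: Rle_mult_inv_pos.
    have -> : powr z = powr (x + y) * powr (z / (x + y)).
      by rewrite -powr_mul //; [congr powr; field; lra | lra].
    apply: Rmult_le_compat_l; first exact: powr_ge0.
    by apply: powr_le_id; split=> //; rewrite /Rdiv; nra.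
  have hx := ratio x ltac:(lra); have hy := ratio y ltac:(lra).
  have -> : powr (x + y) = powr (x + y) * (x / (x + y)) + powr (x + y) * (y / (x + y)).
    by field; lra.
  lra.
- have -> : x = 0 by lra. have -> : y = 0 by lra.
  by rewrite Rplus_0_r powr0; lra.
Qed.

Lemma powr_1p u : 0 <= u -> 1 + a * (u / (1 + u)) <= powr (1 + u).
Proof.
move=> u_ge0; rewrite powr_pos /Rpower; last lra.
have ln_ge : u / (1 + u) <= ln (1 + u).
  have := exp_ineq1_le (ln (/ (1 + u))).
  rewrite exp_ln ?ln_Rinv; [| lra | apply: Rinv_0_lt_compat; lra].
  have -> : u / (1 + u) = 1 - / (1 + u) by field; lra.
  lra.
have := exp_ineq1_le (a * ln (1 + u)); nra.
Qed.

End RealPower.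

Definition alpha : R := 125 / 66.

Local Notation pa := (powr alpha).

Lemma alpha_ge1 : 1 <= alpha.
Proof. rewrite /alpha; lra. Qed.

Lemma Rpower_pow_inv k u : (0 < k)%nat -> 0 < u -> Rpower (u ^ k) (/ INR k) = u.
Proof.
move=> k_gt0 u_gt0; rewrite -Rpower_pow // Rpower_mult Rinv_r ?Rpower_1 //.
by apply: not_0_INR; lia.
Qed.

Lemma pa_root q : 0 < q -> pa q = Rpower (q ^ 125) (/ INR 66).
Proof.
move=> q_gt0; rewrite powr_pos // -Rpower_pow // Rpower_mult.
by congr Rpower; rewrite /alpha /INR; lra.
Qed.

Lemma pa_le_of_pow q u : 0 < q -> 0 < u -> q ^ 125 <= u ^ 66 -> pa q <= u.
Proof.
move=> q_gt0 u_gt0 le_qu; rewrite pa_root // -[X in _ <= X](@Rpower_pow_inv 66) //.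
have inv_ge0 : 0 <= / INR 66 by apply/Rlt_le/Rinv_0_lt_compat/lt_0_INR/ltP.
by apply: Rle_Rpower_l => //; split=> //; apply: pow_lt.
Qed.

Lemma pa_ge_of_pow q u : 0 < q -> 0 < u -> u ^ 66 <= q ^ 125 -> u <= pa q.
Proof.
move=> q_gt0 u_gt0 le_uq; rewrite pa_root // -[X in X <= _](@Rpower_pow_inv 66) //.
have inv_ge0 : 0 <= / INR 66 by apply/Rlt_le/Rinv_0_lt_compat/lt_0_INR/ltP.
by apply: Rle_Rpower_l => //; split=> //; apply: pow_lt.
Qed.

Lemma pa_half_le : pa (1 / 2) <= 269072 / 1000000.
Proof. apply: pa_le_of_pow; lra. Qed.

Lemma pa_3_10_le : pa (3 / 10) <= 102259 / 1000000.
Proof. apply: pa_le_of_pow; lra. Qed.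

Lemma pa_7_10_le : pa (7 / 10) <= 508892 / 1000000.
Proof. apply: pa_le_of_pow; lra. Qed.

Lemma pa_3_2_ge : 215 / 100 <= pa (3 / 2).
Proof. apply: pa_ge_of_pow; lra. Qed.

Lemma pa2_le : pa 2 <= 4.
Proof. apply: pa_le_of_pow; lra. Qed.

Lemma pa3_ge : 6 <= pa 3.
Proof. apply: pa_ge_of_pow; lra. Qed.

(* [(x + 1/2)^a >= x^a (1 + a / (2x + 1))], and [a x^a >= 2x + 1] once [x >= 3/2]. *)
Lemma pa_add_half x : 3 / 2 <= x -> 1 + pa x <= pa (x + 1 / 2).
Proof.
move=> x_ge.
have u_ge0 : 0 <= / (2 * x) by apply/Rlt_le/Rinv_0_lt_compat; lra.
have -> : x + 1 / 2 = x * (1 + / (2 * x)) by field; lra.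
rewrite powr_mul; [|lra|lra].
have := powr_1p alpha_ge1 u_ge0.
have -> : / (2 * x) / (1 + / (2 * x)) = / (2 * x + 1) by field; lra.
move=> bernoulli.
have pa_x_ge : 215 / 100 * (2 * x / 3) <= pa x.
  have -> : x = 3 / 2 * (2 * x / 3) by field.
  rewrite powr_mul; [|lra|lra].
  have := powr_ge_id alpha_ge1 (x := 2 * x / 3) ltac:(lra).
  have := powr_ge0 alpha (2 * x / 3); have := pa_3_2_ge; nra.
have inv_gt0 : 0 < / (2 * x + 1) by apply: Rinv_0_lt_compat; lra.
have inv_r : (2 * x + 1) * / (2 * x + 1) = 1 by field; lra.
have : 2 * x + 1 <= alpha * pa x by rewrite {1}/alpha; lra.
have := powr_ge0 alpha x; nra.
Qed.

(* The fixed point of [c = 2 c 2^-alpha + 1], the recurrence of spine sizes. *)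
Definition spine_const : R := / (1 - 2 * pa (1 / 2)).

Lemma spine_const_gt0 : 0 < spine_const.
Proof. by apply: Rinv_0_lt_compat; have := pa_half_le; lra. Qed.

Lemma spine_constE : 2 * spine_const * pa (1 / 2) + 1 = spine_const.
Proof. by rewrite /spine_const; field; have := pa_half_le; lra. Qed.

Lemma pa_half x : 0 <= x -> pa (x / 2) = pa (1 / 2) * pa x.
Proof. by move=> x_ge0; rewrite -powr_mul; [congr powr; field | lra | lra]. Qed.

(* Tight: the numerical bounds above only bring the left-hand side down to 0.9994. *)
Lemma recurrence_coeffs_le1 :
  spine_const * pa (3 / 10) + pa (7 / 10) + pa (1 / 2) <= 1.
Proof.
have y_ge0 := powr_ge0 alpha (1 / 2); have y_le := pa_half_le.
have p3_ge0 := powr_ge0 alpha (3 / 10); have p3_le := pa_3_10_le.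
have p7_le := pa_7_10_le.
rewrite /spine_const; set y := pa (1 / 2) in y_ge0 y_le *.
have d_gt0 : 0 < 1 - 2 * y by lra.
apply: (Rmult_le_reg_r (1 - 2 * y)) => //.
have -> : (/ (1 - 2 * y) * pa (3 / 10) + pa (7 / 10) + y) * (1 - 2 * y)
   = pa (3 / 10) + (pa (7 / 10) + y) * (1 - 2 * y) by field; lra.
have : (269072 / 1000000 - y) * (1982 / 1000 - 2 * (y + 269072 / 1000000)) >= 0 by nra.
nra.
Qed.

Lemma utree_recurrence_large N m k t : 4 <= N -> 0 <= m <= 3 * N / 10 ->
  0 <= k <= (N - 1) / 2 -> 0 <= t <= 7 * N / 10 ->
  spine_const * pa m + 1 + pa k + pa t <= pa N.
Proof.
move=> N_ge4 m_bd k_bd t_bd.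
have pa_m : pa m <= pa (3 / 10) * pa N by rewrite -powr_mul; [apply: (powr_le alpha_ge1) | |]; lra.
have pa_t : pa t <= pa (7 / 10) * pa N by rewrite -powr_mul; [apply: (powr_le alpha_ge1) | |]; lra.
have pa_k : 1 + pa k <= pa (1 / 2) * pa N.
  have := pa_add_half (x := (N - 1) / 2) ltac:(lra).
  have -> : (N - 1) / 2 + 1 / 2 = N / 2 by field.
  rewrite [pa (N / 2)]pa_half; last lra.
  have : pa k <= pa ((N - 1) / 2) by apply: (powr_le alpha_ge1); lra.
  lra.
have := recurrence_coeffs_le1; have := spine_const_gt0; have := powr_ge0 alpha N.
nra.
Qed.

Close Scope R_scope.

Inductive btree := BEmpty | BNode of btree & btree.

Fixpoint bsize (t : btree) : nat :=
  if t is BNode l r then (bsize l + bsize r).+1 else 0.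

(* Topological minors of btrees; children are unordered, hence [embeds_swap]. *)
Inductive embeds : btree -> btree -> Prop :=
| embeds_empty u : embeds BEmpty u
| embeds_node l r l' r' : embeds l l' -> embeds r r' -> embeds (BNode l r) (BNode l' r')
| embeds_swap l r l' r' : embeds l r' -> embeds r l' -> embeds (BNode l r) (BNode l' r')
| embeds_left t l' r' : embeds t l' -> embeds t (BNode l' r')
| embeds_right t l' r' : embeds t r' -> embeds t (BNode l' r').

(* [descent T w T']: [T'] is reached by walking down from the root of [T],
   and [w] counts the nodes on the walk above [T'] together with the nodes
   of the subtrees hanging off it. *)
Inductive descent : btree -> nat -> btree -> Prop :=
| descent0 t : descent t 0 t
| descentL h X w t : descent X w t -> descent (BNode X h) (bsize h + w).+1 t
| descentR h X w t : descent X w t -> descent (BNode h X) (bsize h + w).+1 t.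

Lemma descent_le0 T w T' : descent T w T' -> w <= 0 -> T = T'.
Proof. by case. Qed.

Lemma descent_split T w T' k : descent T w T' -> k < w ->
  exists w1 h X w2 T1, [/\ descent T w1 T1, T1 = BNode X h \/ T1 = BNode h X,
    descent X w2 T', w1 <= k < w1 + (bsize h).+1 & w = w1 + (bsize h).+1 + w2].
Proof.
move=> dT; elim: dT k => [t|h X w0 t dX IH|h X w0 t dX IH] k // lt_kw.
- have [lt_kh|le_hk] := ltnP k (bsize h).+1.
    by exists 0, h, X, w0, (BNode X h); split; [exact: descent0 | left | | lia | lia].
  have [w1 [h' [X' [w2 [T1 [d1 eT1 d2 lt_k ->]]]]]] := IH (k - (bsize h).+1) ltac:(lia).
  by exists (bsize h + w1).+1, h', X', w2, T1; split=> //; [exact: descentL | lia | lia].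
- have [lt_kh|le_hk] := ltnP k (bsize h).+1.
    by exists 0, h, X, w0, (BNode h X); split; [exact: descent0 | right | | lia | lia].
  have [w1 [h' [X' [w2 [T1 [d1 eT1 d2 lt_k ->]]]]]] := IH (k - (bsize h).+1) ltac:(lia).
  by exists (bsize h + w1).+1, h', X', w2, T1; split=> //; [exact: descentR | lia | lia].
Qed.

Lemma heavy_descent s T : s < bsize T -> exists w l r,
  [/\ descent T w (BNode l r), bsize l <= s, bsize r <= s, s < bsize (BNode l r)
    & w + bsize (BNode l r) = bsize T].
Proof.
elim: T => [|a IHa b IHb] //= lt_sT.
have [lt_sa|le_as] := ltnP s (bsize a).
  have [w [l [r [d l_le r_le lt_s <-]]]] := IHa lt_sa.
  by exists (bsize b + w).+1, l, r; split=> //=; [exact: descentL | lia].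
have [lt_sb|le_bs] := ltnP s (bsize b).
  have [w [l [r [d l_le r_le lt_s <-]]]] := IHb lt_sb.
  by exists (bsize a + w).+1, l, r; split=> //=; [exact: descentR | lia].
by exists 0, a, b; split=> //; exact: descent0.
Qed.

(* [spine _ B m tl] is [G_m] above [tl], with [G_m = G_(m/2)], then a node
   carrying [B (m-1)], then [G_(m/2)]: a walk of weight at most [m] sends the
   hanging subtree straddling weight [m/2] into [B (m-1)] and the two halves
   of the walk into the two copies of [G_(m/2)]. *)
Fixpoint spine (fuel : nat) (B : nat -> btree) (m : nat) (tl : btree) : btree :=
  if fuel is fuel'.+1 then
    if m is m'.+1 then spine fuel' B m./2 (BNode (B m') (spine fuel' B m./2 tl)) else tl
  else tl.

Lemma embeds_spine_tail fuel B m tl t : embeds t tl -> embeds t (spine fuel B m tl).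
Proof.
elim: fuel m tl => [|fuel IH] [|m] tl //= t_tl.
by apply/IH/embeds_right/IH.
Qed.

Lemma spine_universal B M :
    (forall k, k < M -> forall T, bsize T <= k -> embeds T (B k)) ->
  forall fuel m tl T w T', m <= fuel -> m <= M -> descent T w T' -> w <= m ->
  embeds T' tl -> embeds T (spine fuel B m tl).
Proof.
move=> B_univ; elim=> [|fuel IH] [|m] tl T w T' m_le m_leM dT w_le T'_tl;
  try by rewrite (descent_le0 dT) //=; lia.
have half_le : m.+1./2 <= fuel by rewrite -divn2; lia.
have [le_w_half|lt_half_w] := leqP w m.+1./2.
  by apply: (IH _ _ T w T') => //; [lia | apply/embeds_right/embeds_spine_tail].
have [w1 [h [X [w2 [T1 [d1 eT1 d2 w1_bd ew]]]]]] := descent_split dT lt_half_w.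
apply: (IH _ _ T w1 T1) => //; try lia.
have X_emb : embeds X (spine fuel B m.+1./2 tl).
  by apply: (IH _ _ X w2 T') => //; move: w1_bd; rewrite -divn2; lia.
have h_emb : embeds h (B m) by apply: B_univ; lia.
by case: eT1 => ->; [exact: embeds_swap | exact: embeds_node].
Qed.

Definition light_bound (n : nat) : nat := (7 * n) %/ 10.

Lemma light_bound_ineqs n : 0 < n ->
  [/\ light_bound n < n, 10 * (n - light_bound n - 1) + 1 <= 3 * n & 10 * light_bound n <= 7 * n].
Proof.
move=> n_gt0; rewrite /light_bound.
have := divn_eq (7 * n) 10; have := ltn_pmod (7 * n) (isT : 0 < 10).
by split; lia.
Qed.

Fixpoint utree_fuel (fuel n : nat) : btree :=
  if fuel is fuel'.+1 then
    if n is n'.+1 then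
      spine n (utree_fuel fuel') (n - light_bound n - 1)
        (BNode (utree_fuel fuel' n'./2) (utree_fuel fuel' (light_bound n)))
    else BEmpty
  else BEmpty.

Lemma utree_fuelS fuel n : utree_fuel fuel.+1 n.+1 =
  spine n.+1 (utree_fuel fuel) (n.+1 - light_bound n.+1 - 1)
    (BNode (utree_fuel fuel n./2) (utree_fuel fuel (light_bound n.+1))).
Proof. by []. Qed.

Definition utree (n : nat) : btree := utree_fuel n.+1 n.

Lemma utree_fuel_universal fuel n T : n < fuel -> bsize T <= n -> embeds T (utree_fuel fuel n).
Proof.
elim: fuel n T => [|fuel IH] n T //= n_lt T_le.
case: n n_lt T_le => [|n'] n_lt T_le.
  by case: T T_le => // _; exact: embeds_empty.
have [lb_lt walk_le lb_le] := light_bound_ineqs (ltn0Sn n').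
have [T_light|T_heavy] := leqP (bsize T) (light_bound n'.+1).
  by apply/embeds_spine_tail/embeds_right/IH; lia.
have [w [l [r [dT l_le r_le lt_lb ew]]]] := heavy_descent T_heavy.
rewrite /= in lt_lb ew.
apply: (spine_universal (M := n'.+1) _ (T' := BNode l r) (w := w)) => //; try lia.
  by move=> k k_lt T0 T0_le; apply: IH; lia.
have [le_lr|lt_rl] := leqP (bsize l) (bsize r).
  by apply: embeds_node; apply: IH; rewrite -?divn2; lia.
by apply: embeds_swap; apply: IH; rewrite -?divn2; lia.
Qed.

Lemma utree_universal n T : bsize T <= n -> embeds T (utree n).
Proof. exact: utree_fuel_universal. Qed.

Lemma bsize_spine fuel B m tl :
  bsize (spine fuel B m tl) = bsize (spine fuel B m BEmpty) + bsize tl.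
Proof.
elim: fuel m tl => [|fuel IH] [|m] tl //=.
by rewrite !(IH _ (BNode _ _)) /= (IH _ tl); lia.
Qed.

Lemma bsize_spineS fuel B m : bsize (spine fuel.+1 B m.+1 BEmpty) =
  (bsize (spine fuel B m.+1./2 BEmpty) + bsize (B m) + bsize (spine fuel B m.+1./2 BEmpty)).+1.
Proof. by rewrite /= bsize_spine /=; lia. Qed.

Lemma INR_leq a b : a <= b -> (INR a <= INR b)%R.
Proof. by move=> /leP; apply: le_INR. Qed.

Lemma INR_addn a b : INR (a + b) = (INR a + INR b)%R.
Proof. by rewrite -plusE plus_INR. Qed.

Lemma INR_muln a b : INR (a * b) = (INR a * INR b)%R.
Proof. by rewrite -multE mult_INR. Qed.

Lemma INR_expn a k : INR (expn a k) = (INR a ^ k)%R.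
Proof. by elim: k => [|k IH]; rewrite ?expn0 // expnS INR_muln IH. Qed.

Open Scope R_scope.

Lemma spine_size_le B fuel m : (m <= fuel)%nat ->
    (forall k, (k < m)%nat -> INR (bsize (B k)) <= pa (INR k)) ->
  INR (bsize (spine fuel B m BEmpty)) <= spine_const * pa (INR m).
Proof.
elim: fuel m => [|fuel IH] m m_le B_le.
  have -> : m = 0%nat by lia.
  by rewrite /= powr0; lra.
case: m m_le B_le => [|m] m_le B_le.
  by rewrite /= powr0; lra.
set h := m.+1./2.
have IHh : INR (bsize (spine fuel B h BEmpty)) <= spine_const * pa (INR h).
  apply: IH => [|k k_lt]; first by rewrite /h -divn2; lia.
  by apply: B_le; move: k_lt; rewrite /h -divn2; lia.
have pa_h : pa (INR h) <= pa (1 / 2) * pa (INR m.+1).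
  rewrite -pa_half; last exact: pos_INR.
  apply: (powr_le alpha_ge1); split; first exact: pos_INR.
  have := INR_leq (_ : (2 * h <= m.+1)%nat); rewrite INR_muln /=.
  by move=> /(_ ltac:(rewrite /h -divn2; lia)); lra.
have pa_Sm : 1 + pa (INR m) <= pa (INR m.+1).
  rewrite -{1}(powr1 alpha) S_INR Rplus_comm.
  by apply: (powr_superadd alpha_ge1); [exact: pos_INR | lra].
have c_gt0 := spine_const_gt0.
have := Rmult_le_compat_l _ _ _ (Rlt_le _ _ c_gt0) pa_h.
have := f_equal (Rmult^~ (pa (INR m.+1))) spine_constE.
have := B_le m (ltnSn m).
rewrite bsize_spineS -/h (S_INR (_ + _)) !INR_addn.
nra.
Qed.

Lemma utree_recurrence n : (0 < n)%nat ->
  spine_const * pa (INR (n - light_bound n - 1)) + 1 + pa (INR n.-1./2)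
    + pa (INR (light_bound n)) <= pa (INR n).
Proof.
move=> n_gt0; have [lb_lt walk_le lb_le] := light_bound_ineqs n_gt0.
have [n_ge4|n_lt4] := leqP 4 n.
  have k_le : (2 * n.-1./2 + 1 <= n)%nat by rewrite -divn2; lia.
  apply: utree_recurrence_large; [| split; first exact: pos_INR ..].
  - by have := INR_leq n_ge4; rewrite /=; lra.
  - by have := INR_leq walk_le; rewrite INR_addn !INR_muln /=; lra.
  - by have := INR_leq k_le; rewrite INR_addn !INR_muln /=; lra.
  - by have := INR_leq lb_le; rewrite !INR_muln /=; lra.
have [->|[->|->]] : n = 1%nat \/ n = 2%nat \/ n = 3%nat by lia.
all: rewrite /light_bound /= ?powr0 ?powr1.
- lra.
- by have := powr_ge_id alpha_ge1 (x := 1 + 1); lra.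
- have -> : 1 + 1 + 1 = 3 by lra.
  have -> : 1 + 1 = 2 by lra.
  by have := pa2_le; have := pa3_ge; lra.
Qed.

Lemma utree_fuel_size_le fuel n : (n < fuel)%nat ->
  INR (bsize (utree_fuel fuel n)) <= pa (INR n).
Proof.
elim: fuel n => [|fuel IH] [|n'] n_lt //; first by rewrite /= powr0; lra.
rewrite utree_fuelS; set n := n'.+1.
have [lb_lt walk_le _] := @light_bound_ineqs n (ltn0Sn n').
have spine_le := spine_size_le (B := utree_fuel fuel) (fuel := n)
  (m := n - light_bound n - 1) ltac:(lia) (fun k k_lt => IH k ltac:(lia)).
have k_le : INR (bsize (utree_fuel fuel n'./2)) <= pa (INR n.-1./2).
  by apply: IH; rewrite -divn2; lia.
have lb_size_le := IH (light_bound n) ltac:(lia).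
have := @utree_recurrence n (ltn0Sn n').
rewrite bsize_spine [bsize (BNode _ _)]/= INR_addn S_INR INR_addn.
lra.
Qed.

Lemma utree_size_le n : INR (bsize (utree n)) <= pa (INR n).
Proof. exact: utree_fuel_size_le. Qed.

Close Scope R_scope.

Section LongestCommonPrefix.

Variable T : eqType.
Implicit Types s r : seq T.

Lemma prefix_anti s1 s2 : prefix s1 s2 -> prefix s2 s1 -> s1 = s2.
Proof.
rewrite prefixE => /eqP e /size_prefix le21.
by rewrite -e take_oversize.
Qed.

Fixpoint lcp s1 s2 : seq T :=
  if s1 is x :: s1' then
    if s2 is y :: s2' then (if x == y then x :: lcp s1' s2' else [::]) else [::]
  else [::].

Lemma lcp_cons x s1 s2 : lcp (x :: s1) (x :: s2) = x :: lcp s1 s2.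
Proof. by rewrite /= eqxx. Qed.

Lemma prefix_lcpl s1 s2 : prefix (lcp s1 s2) s1.
Proof. by elim: s1 s2 => [|x s1 IH] [|y s2] //=; case: eqP => //= _; rewrite eqxx IH. Qed.

Lemma prefix_lcpr s1 s2 : prefix (lcp s1 s2) s2.
Proof. by elim: s1 s2 => [|x s1 IH] [|y s2] //=; case: eqP => //= ->; rewrite eqxx IH. Qed.

Lemma prefix_lcp r s1 s2 : prefix r s1 -> prefix r s2 -> prefix r (lcp s1 s2).
Proof.
elim: r s1 s2 => [|z r IH] [|x s1] [|y s2] //=; rewrite ?prefix0s //.
by move=> /andP[/eqP <- r_s1] /andP[/eqP <- r_s2]; rewrite eqxx /= eqxx IH.
Qed.

End LongestCommonPrefix.

(* A node of a btree is named by its address, the word of turns from the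
   root, [false] going left and [true] going right. *)
Fixpoint nodes (t : btree) : seq (seq bool) :=
  if t is BNode l r then [::] :: map (cons false) (nodes l) ++ map (cons true) (nodes r)
  else [::].

Lemma mem_map_cons (b c : bool) w (s : seq (seq bool)) :
  (c :: w \in map (cons b) s) = (c == b) && (w \in s).
Proof.
apply/mapP/andP => [[v v_s [-> ->]] | [/eqP -> w_s]]; first by [].
by exists w.
Qed.

Lemma nil_notin_map_cons b (s : seq (seq bool)) : ([::] \in map (cons b) s) = false.
Proof. by apply/mapP => -[]. Qed.

Lemma mem_nodesN l r w : (w \in nodes (BNode l r)) =
  if w is b :: w' then w' \in nodes (if b then r else l) else true.
Proof.
rewrite /= in_cons mem_cat.
by case: w => [|[] w] //=; rewrite !mem_map_cons ?nil_notin_map_cons ?orbF.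
Qed.

Lemma nodes_uniq t : uniq (nodes t).
Proof.
elim: t => [|l IHl r IHr] //=.
rewrite cat_uniq !map_inj_uniq ?IHl ?IHr //; try by move=> ? ? [].
rewrite mem_cat !nil_notin_map_cons andbT /=.
by apply/hasPn => w /mapP [v _ ->]; rewrite mem_map_cons.
Qed.

Lemma size_nodes t : size (nodes t) = bsize t.
Proof. by elim: t => [|l IHl r IHr] //=; rewrite size_cat !size_map IHl IHr. Qed.

Lemma nodes_take t w k : w \in nodes t -> take k w \in nodes t.
Proof.
elim: t w k => [|l IHl r IHr] w [|k] //; rewrite ?take0 !mem_nodesN //.
by case: w => [|[] w] //=; [apply: IHr | apply: IHl].
Qed.

Definition addr_embedding (t u : btree) (f : seq bool -> seq bool) :=
  [/\ {in nodes t, forall w, f w \in nodes u},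
      {in nodes t &, forall v w, f (lcp v w) = lcp (f v) (f w)}
    & {in nodes t &, injective f}].

Lemma addr_embedding_cons b t l' r' f : addr_embedding t (if b then r' else l') f ->
  addr_embedding t (BNode l' r') (fun w => b :: f w).
Proof.
move=> [f_in f_lcp f_inj]; split.
- by move=> w w_t; rewrite mem_nodesN; apply: f_in.
- by move=> v w v_t w_t; rewrite lcp_cons f_lcp.
- by move=> v w v_t w_t [] /f_inj; apply.
Qed.

Lemma addr_embedding_node b l r l' r' fl fr :
    addr_embedding l (if b then r' else l') fl ->
    addr_embedding r (if b then l' else r') fr ->
  addr_embedding (BNode l r) (BNode l' r')
    (fun w => if w is c :: w' then (c (+) b) :: (if c then fr w' else fl w') else [::]).
Proof.
move=> [fl_in fl_lcp fl_inj] [fr_in fr_lcp fr_inj]; split.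
- by move=> [|[] w]; rewrite !mem_nodesN //= ?if_neg; [apply: fr_in | apply: fl_in].
- move=> [|[] v] [|[] w]; rewrite !mem_nodesN //= => v_t w_t;
    by rewrite ?eqxx ?fl_lcp ?fr_lcp //; case: (b).
- move=> [|[] v] [|[] w]; rewrite !mem_nodesN //= => v_t w_t; case: (b) => //= -[] e;
    by congr cons; by [apply: fr_inj | apply: fl_inj].
Qed.

Lemma embeds_addr_embedding t u : embeds t u -> exists f, addr_embedding t u f.
Proof.
elim=> {t u} [u | l r l' r' _ [fl el] _ [fr er] | l r l' r' _ [fl el] _ [fr er]
             | t l' r' _ [f e] | t l' r' _ [f e]].
- by exists idfun; split.
- by eexists; apply: (addr_embedding_node (b := false)); [exact: el | exact: er].
- by eexists; apply: (addr_embedding_node (b := true)); [exact: el | exact: er].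
- by eexists; apply: (addr_embedding_cons (b := false)); exact: e.
- by eexists; apply: (addr_embedding_cons (b := true)); exact: e.
Qed.

Section AddressTree.

Variable L : seq (seq bool).
Hypothesis L_uniq : uniq L.
Hypothesis L_closed : forall w k, w \in L -> take k w \in L.

Definition addr (i : 'I_(size L)) : seq bool := nth [::] L i.

(* The parent of a node is named by its address without the last letter;
   the default [i] of [insubd] is never used since [L] is prefix closed. *)
Definition addr_parent (i : 'I_(size L)) : option 'I_(size L) :=
  if size (addr i) is d.+1 then Some (insubd i (index (take d (addr i)) L)) else None.

Lemma addr_insubd i0 w : w \in L -> addr (insubd i0 (index w L)) = w.
Proof. by move=> w_L; rewrite /addr val_insubd index_mem w_L nth_index. Qed.

Lemma addr_inj : injective addr.
Proof.
move=> i j e; apply/val_inj/eqP.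
by rewrite -(nth_uniq [::] (ltn_ord i) (ltn_ord j) L_uniq) -/(addr i) e.
Qed.

Lemma insubd_index_addr i0 i : insubd i0 (index (addr i) L) = i.
Proof. by apply: addr_inj; rewrite addr_insubd ?mem_nth. Qed.

Lemma up_iter_addr_parent k i : up_iter addr_parent k i =
  if k <= size (addr i) then Some (insubd i (index (take (size (addr i) - k) (addr i)) L))
  else None.
Proof.
elim: k => [|k IH]; first by rewrite subn0 take_size insubd_index_addr.
rewrite /up_iter iterS -/(up_iter _ k i) IH.
have take_L j : take j (addr i) \in L by apply/L_closed/mem_nth.
case: (ltngtP k (size (addr i))) => [lt_k|lt_s|->] /=.
- rewrite /addr_parent addr_insubd // size_takel ?leq_subr //.
  rewrite (_ : _ - k = (size (addr i) - k.+1).+1) /=; last lia.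
  by rewrite take_takel //; congr Some; apply: addr_inj; rewrite !addr_insubd.
- by [].
- by rewrite subnn /addr_parent addr_insubd // take0.
Qed.

Lemma addr_parent_ancestorE a x : ancestor addr_parent a x <-> prefix (addr a) (addr x).
Proof.
split=> [[k]|a_x].
  rewrite up_iter_addr_parent; case: ifP => // _ [<-].
  by rewrite addr_insubd ?prefix_take // L_closed ?mem_nth.
exists (size (addr x) - size (addr a)).
rewrite up_iter_addr_parent leq_subr subKn ?size_prefix //.
by move: a_x; rewrite prefixE => /eqP ->; rewrite insubd_index_addr.
Qed.

Lemma addr_parent_rooted r : addr r = [::] -> is_rooted_tree addr_parent.
Proof.
move=> r_nil; split.
  exists r => x; split=> [|->]; last by rewrite /addr_parent r_nil.
  rewrite /addr_parent; case e: (size (addr x)) => // _.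
  by apply: addr_inj; rewrite r_nil; apply/eqP; rewrite -size_eq0 e.
by move=> x; exists (size (addr x)).+1; rewrite up_iter_addr_parent ltnn.
Qed.

Lemma addr_parent_nca x y z : addr z = lcp (addr x) (addr y) -> is_nca addr_parent x y z.
Proof.
move=> e; split; [|split].
- by apply/addr_parent_ancestorE; rewrite e prefix_lcpl.
- by apply/addr_parent_ancestorE; rewrite e prefix_lcpr.
- move=> a /addr_parent_ancestorE a_x /addr_parent_ancestorE a_y.
  by apply/addr_parent_ancestorE; rewrite e; apply: prefix_lcp.
Qed.

End AddressTree.

Lemma up_iterSr (T : finType) (par : T -> option T) k x :
  up_iter par k.+1 x = if par x is Some p then up_iter par k p else None.
Proof.
rewrite /up_iter iterSr /=; case: (par x) => [p|] //.
by elim: k => //= k ->.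
Qed.

Lemma ancestor_par (T : finType) (par : T -> option T) a x p :
  par x = Some p -> ancestor par a p -> ancestor par a x.
Proof. by move=> ex [k e]; exists k.+1; rewrite up_iterSr ex. Qed.

Section TreeAddress.

Variables (n : nat) (par : 'I_n -> option 'I_n).
Hypothesis par_tree : is_rooted_tree par.
Hypothesis par_binary : is_binary par.

Lemma exists_up_iter_none x : exists k, up_iter par k x == None.
Proof. by have [k e] := par_tree.2 x; exists k; rewrite e. Qed.

(* [ex_minn] counts the parent steps needed to leave the tree: one more than the depth. *)
Definition depth x : nat := (ex_minn (exists_up_iter_none x)).-1.

Lemma depth_root x : par x = None -> depth x = 0.
Proof.
move=> ex; rewrite /depth; case: ex_minnP => m _ min_m.
have : m <= 1 by apply: min_m; rewrite up_iterSr ex.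
by case: m {min_m} => [|[]].
Qed.

Lemma depth_par x p : par x = Some p -> depth x = (depth p).+1.
Proof.
move=> ex; rewrite /depth; case: ex_minnP => a ea min_a; case: ex_minnP => b eb min_b.
have b_gt0 : 0 < b by case: b eb {min_b}.
have a_gt0 : 0 < a by case: a ea {min_a}.
have : a <= b.+1 by apply: min_a; rewrite up_iterSr ex.
have : b <= a.-1 by apply: min_b; move: ea; rewrite -(prednK a_gt0) up_iterSr ex.
lia.
Qed.

(* The bit appended to the address of [x]: a binary node has at most one
   child with a smaller sibling. *)
Definition smaller_sibling x : bool := [exists c, (par c == par x) && (c < x)].

Fixpoint addr_fuel (fuel : nat) x : seq bool :=
  if fuel is fuel'.+1 then
    if par x is Some p then rcons (addr_fuel fuel' p) (smaller_sibling x) else [::]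
  else [::].

Definition tree_addr x : seq bool := addr_fuel (depth x) x.

Lemma tree_addr_root x : par x = None -> tree_addr x = [::].
Proof. by move=> ex; rewrite /tree_addr depth_root. Qed.

Lemma tree_addr_par x p : par x = Some p -> tree_addr x = rcons (tree_addr p) (smaller_sibling x).
Proof. by move=> ex; rewrite /tree_addr (depth_par ex) /= ex. Qed.

Lemma tree_addr_nil x : tree_addr x = [::] -> par x = None.
Proof. by case ex: (par x) => [p|] //; rewrite (tree_addr_par ex); case: (tree_addr p). Qed.

Lemma tree_addr_rcons x s b : tree_addr x = rcons s b ->
  exists p, [/\ par x = Some p, tree_addr p = s & smaller_sibling x = b].
Proof.
case ex: (par x) => [p|]; last by rewrite tree_addr_root //; case: s.
by rewrite (tree_addr_par ex) => /rcons_inj [<- <-]; exists p.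
Qed.

Lemma smaller_sibling_inj x y p : par x = Some p -> par y = Some p ->
  smaller_sibling x = smaller_sibling y -> x = y.
Proof.
have neq_lt u v : u < v -> u != v by move=> lt_uv; apply/eqP => e; rewrite e ltnn in lt_uv.
(* Siblings [u < v] with equal bits force a third child [c < u] of [p]. *)
have no_pair u v : par u = Some p -> par v = Some p -> u < v ->
    smaller_sibling u = smaller_sibling v -> False.
  move=> eu ev lt_uv e_bit.
  have : smaller_sibling u by rewrite e_bit; apply/existsP; exists u; rewrite eu ev eqxx.
  case/existsP=> c /andP[/eqP ec lt_cu].
  have := par_binary p; rewrite leqNgt => /negP; apply; apply/card_gt2P.
  exists c, u, v; rewrite !inE ec eu ev !eqxx neq_lt // neq_lt // eq_sym neq_lt //.
  exact: ltn_trans lt_uv.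
move=> ex ey e_bit; case: (ltngtP x y) => [lt_xy|lt_yx|/val_inj //].
  by case: (no_pair x y).
by case: (no_pair y x).
Qed.

Lemma tree_addr_inj : injective tree_addr.
Proof.
move=> x y; move e: (tree_addr x) => s.
elim/last_ind: s x y e => [|s b IH] x y ex ey.
  have [r root_r] := par_tree.1.
  by rewrite ((root_r x).1 (tree_addr_nil ex)) ((root_r y).1 (tree_addr_nil (esym ey))).
have [p [ep eps epb]] := tree_addr_rcons ex.
have [q [eq eqs eqb]] := tree_addr_rcons (esym ey).
have e_pq : p = q by apply: IH; rewrite ?eps ?eqs.
by rewrite e_pq in ep; apply: (smaller_sibling_inj ep eq); rewrite epb eqb.
Qed.

Lemma tree_addr_take x k : exists2 a, ancestor par a x & tree_addr a = take k (tree_addr x).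
Proof.
move e: (tree_addr x) => s; elim/last_ind: s x e => [|s b IH] x ex.
  by exists x; [exists 0 | rewrite ex].
have [lt_k|le_sk] := ltnP k (size (rcons s b)); last first.
  by exists x; [exists 0 | rewrite ex take_oversize].
have [p [ep ep_s _]] := tree_addr_rcons ex.
have [a a_p ea] := IH p ep_s.
exists a; first exact: ancestor_par ep a_p.
by rewrite ea -cats1 takel_cat //; rewrite size_rcons in lt_k.
Qed.

Lemma ancestor_prefix a x : ancestor par a x -> prefix (tree_addr a) (tree_addr x).
Proof.
move=> [k]; elim: k x => [|k IH] x; first by move=> [->]; apply: prefix_refl.
rewrite up_iterSr; case ex: (par x) => [p|] // a_p.
by rewrite (tree_addr_par ex); apply: prefix_trans (IH p a_p) (prefix_rcons _ _).
Qed.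

Lemma prefix_ancestor a x : prefix (tree_addr a) (tree_addr x) -> ancestor par a x.
Proof.
rewrite prefixE => /eqP e; have [a' a'_x ea'] := tree_addr_take x (size (tree_addr a)).
by rewrite -(tree_addr_inj (etrans ea' e)).
Qed.

Lemma tree_addr_nca u v w : is_nca par u v w ->
  tree_addr w = lcp (tree_addr u) (tree_addr v).
Proof.
move=> [w_u [w_v max_w]]; apply: prefix_anti.
  by apply: prefix_lcp; apply: ancestor_prefix.
have [a a_u ea] := tree_addr_take u (size (lcp (tree_addr u) (tree_addr v))).
have {}ea : tree_addr a = lcp (tree_addr u) (tree_addr v).
  by rewrite ea; apply/eqP; rewrite -prefixE prefix_lcpl.
rewrite -ea; apply/ancestor_prefix/max_w => //.
by apply: prefix_ancestor; rewrite ea prefix_lcpr.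
Qed.

End TreeAddress.

Fixpoint btree_of_pred (fuel : nat) (P : pred (seq bool)) : btree :=
  if fuel is fuel'.+1 then
    if P [::] then
      BNode (btree_of_pred fuel' (fun w => P (false :: w)))
            (btree_of_pred fuel' (fun w => P (true :: w)))
    else BEmpty
  else BEmpty.

Lemma nodes_btree_of_pred fuel (P : pred (seq bool)) :
    (forall w k, P w -> P (take k w)) -> (forall w, P w -> size w < fuel) ->
  nodes (btree_of_pred fuel P) =i P.
Proof.
elim: fuel P => [|fuel IH] P P_closed P_size w /=.
  by apply/esym/negbTE/negP => /P_size.
case P_nil: (P [::]); last first.
  by apply/esym/negbTE/negP => /(P_closed _ 0); rewrite take0 P_nil.
rewrite mem_nodesN; case: w => [|[] w] //=; rewrite IH //.
all: by [move=> v k /(P_closed _ k.+1) | move=> v /P_size].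
Qed.

Section BinaryTree.

Variables (n : nat) (par : 'I_n -> option 'I_n).
Hypothesis par_tree : is_rooted_tree par.
Hypothesis par_binary : is_binary par.

Lemma btree_of_tree : exists2 t, bsize t = n & forall x, tree_addr par_tree x \in nodes t.
Proof.
have [fuel addr_lt] : exists fuel, forall x, size (tree_addr par_tree x) < fuel.
  by exists (\max_x size (tree_addr par_tree x)).+1 => x; rewrite ltnS (leq_bigmax x).
pose t := btree_of_pred fuel (mem (codom (tree_addr par_tree))).
have nodes_t : nodes t =i codom (tree_addr par_tree).
  apply: nodes_btree_of_pred => [w k /codomP [x ->] | w /codomP [x ->] //].
  by have [a _ <-] := tree_addr_take par_tree x k; apply: codom_f.
exists t => [|x]; last by rewrite nodes_t codom_f.
rewrite -size_nodes -(card_ord n) -(size_codom (tree_addr par_tree)); apply: perm_size.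
apply: uniq_perm nodes_t; first exact: nodes_uniq.
by rewrite codomE map_inj_uniq ?enum_uniq //; apply: tree_addr_inj.
Qed.

Lemma binary_tree_utree_addr : exists g : 'I_n -> seq bool,
  [/\ forall x, g x \in nodes (utree n), injective g &
      forall u v w, is_nca par u v w -> g w = lcp (g u) (g v)].
Proof.
have [t size_t addr_t] := btree_of_tree.
have [f [f_in f_lcp f_inj]] := embeds_addr_embedding (utree_universal (eq_leq size_t)).
exists (f \o tree_addr par_tree); split=> /=
  [x | x y /f_inj e | u v w /(tree_addr_nca par_tree par_binary) ->].
- exact: f_in.
- by apply: (tree_addr_inj par_binary); apply: e.
- exact: f_lcp.
Qed.

End BinaryTree.

Fixpoint bits_of (l k : nat) : seq bool :=
  if l is l'.+1 then odd k :: bits_of l' k./2 else [::].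

Fixpoint nat_of_bits (s : seq bool) : nat :=
  if s is b :: s' then b + (nat_of_bits s').*2 else 0.

Lemma size_bits_of l k : size (bits_of l k) = l.
Proof. by elim: l k => [|l IH] k //=; rewrite IH. Qed.

Lemma bits_ofK l k : k < expn 2 l -> nat_of_bits (bits_of l k) = k.
Proof.
elim: l k => [|l IH] k /=; first by rewrite expn0; case: k.
rewrite expnS => lt_k; rewrite IH ?odd_double_half //.
by rewrite -divn2 ltn_divLR //; lia.
Qed.

Open Scope R_scope.

Lemma Rceil_ge x : x <= IZR (Rceil x).
Proof. by rewrite /Rceil minus_IZR; have [] := archimed (- x); lra. Qed.

Lemma Rceil_ge0 x : 0 <= x -> (0 <= Rceil x)%Z.
Proof. by move=> x_ge0; apply: le_IZR; have := Rceil_ge x; lra. Qed.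

Lemma ln2_gt0 : 0 < ln 2.
Proof. by have := ln_lt_2; lra. Qed.

Lemma log2_ge0 x : 1 <= x -> 0 <= log2 x.
Proof.
move=> x_ge1; rewrite /log2; apply: Rle_mult_inv_pos; last exact: ln2_gt0.
case: (Rle_lt_or_eq_dec _ _ x_ge1) => [x_gt1|<-]; last by rewrite ln_1; lra.
by rewrite -ln_1; apply/Rlt_le/ln_increasing; lra.
Qed.

Lemma Rpower_2_log2 x : 0 < x -> Rpower 2 (log2 x) = x.
Proof.
move=> x_gt0; rewrite /Rpower /log2.
have -> : ln x / ln 2 * ln 2 = ln x by field; have := ln2_gt0; lra.
exact: exp_ln.
Qed.

Lemma bits_bound_ge0 n : (0 < n)%nat -> (0 <= Rceil (1.894 * log2 (INR n)))%Z.
Proof.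
move=> n_gt0; apply/Rceil_ge0/Rmult_le_pos; first lra.
by apply: log2_ge0; have := INR_leq n_gt0; rewrite /=; lra.
Qed.

Lemma le_exp_bits m n : (0 < n)%nat -> INR m <= Rpower (INR n) 1.894 ->
  (m <= expn 2 (Z.to_nat (Rceil (1.894 * log2 (INR n)))))%nat.
Proof.
move=> n_gt0 m_le; have n_ge1 : 1 <= INR n by have := INR_leq n_gt0; rewrite /=; lra.
apply/leP/INR_le; rewrite INR_expn (_ : INR 2 = 2) -?Rpower_pow; try (simpl; lra).
rewrite (INR_IZR_INZ (Z.to_nat _)) Z2Nat.id; last exact: bits_bound_ge0.
apply: (Rle_trans _ _ _ m_le).
rewrite -{1}(@Rpower_2_log2 (INR n)); last lra.
rewrite Rpower_mult Rmult_comm; apply: Rle_Rpower; first lra.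
exact: Rceil_ge.
Qed.

Lemma utree_size_bound n : (0 < n)%nat ->
  INR (size (nodes (utree n))) <= Rpower (INR n) 1.894.
Proof.
move=> n_gt0; have n_ge1 : 1 <= INR n by have := INR_leq n_gt0; rewrite /=; lra.
rewrite size_nodes; apply: Rle_trans (utree_size_le n) _.
by rewrite powr_pos; [apply: Rle_Rpower; rewrite /alpha; lra | lra].
Qed.

Close Scope R_scope.

Lemma nil_in_utree n : 0 < n -> [::] \in nodes (utree n).
Proof.
move=> n_gt0; have := @utree_universal n (BNode BEmpty BEmpty) n_gt0.
by case: (utree n) => [e|l r _]; [inversion e | rewrite mem_nodesN].
Qed.

Lemma utree_top_minor n : 0 < n ->
  exists (m : nat) (parU : 'I_m -> option 'I_m),
    [/\ is_rooted_tree parU, (INR m <= Rpower (INR n) 1.894)%R &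
        forall parT : 'I_n -> option 'I_n,
          is_rooted_tree parT -> is_binary parT -> top_minor parT parU].
Proof.
move=> n_gt0; set L := nodes (utree n).
have L_uniq : uniq L := nodes_uniq _.
have L_closed w k : w \in L -> take k w \in L by apply: nodes_take.
have lt_nil : index [::] L < size L by rewrite index_mem; apply: nil_in_utree.
pose r := Ordinal lt_nil.
have addr_r : addr r = [::] by rewrite /addr nth_index // -index_mem.
exists (size L), (@addr_parent L); split.
- exact: (addr_parent_rooted L_uniq L_closed addr_r).
- exact: utree_size_bound.
- move=> parT parT_tree parT_bin.
  have [g [g_in g_inj g_nca]] := binary_tree_utree_addr parT_tree parT_bin.
  exists (fun x => insubd r (index (g x) L)); split.
    by move=> x y /(congr1 (@addr L)); rewrite !addr_insubd // => /g_inj.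
  by move=> u v w /g_nca e; apply: addr_parent_nca => //; rewrite !addr_insubd.
Qed.

Lemma utree_nca_labeling n : 0 < n ->
  exists dec : seq bool -> seq bool -> seq bool,
    forall parT : 'I_n -> option 'I_n, is_rooted_tree parT -> is_binary parT ->
    exists lab : 'I_n -> seq bool,
      [/\ injective lab,
          forall u, (Z.of_nat (size (lab u)) <= Rceil (1.894 * log2 (INR n)))%Z &
          forall u v w, is_nca parT u v w -> dec (lab u) (lab v) = lab w].
Proof.
move=> n_gt0; set L := nodes (utree n).
set l := Z.to_nat (Rceil (1.894 * log2 (INR n))).
have L_le : size L <= expn 2 l by apply/le_exp_bits/utree_size_bound.
pose code w := bits_of l (index w L).
pose word s := nth [::] L (nat_of_bits s).
have codeK w : w \in L -> word (code w) = w.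
  by move=> w_L; rewrite /word /code bits_ofK ?nth_index // (leq_trans _ L_le) ?index_mem.
exists (fun s1 s2 => code (lcp (word s1) (word s2))) => parT parT_tree parT_bin.
have [g [g_in g_inj g_nca]] := binary_tree_utree_addr parT_tree parT_bin.
exists (code \o g); split=> /= [x y /(congr1 word) | u | u v w /g_nca ->].
- by rewrite !codeK // => /g_inj.
- by rewrite size_bits_of Z2Nat.id; [exact: Z.le_refl | exact: bits_bound_ge0].
- by rewrite !codeK.
Qed.

Theorem mainTheorem1 :
  forall n : nat, 0 < n ->
  (* universal tree for binary rooted trees on n nodes *)
  (exists (m : nat) (parU : 'I_m -> option 'I_m),
      is_rooted_tree parU /\
      (INR m <= Rpower (INR n) 1.894)%R /\
      forall parT : 'I_n -> option 'I_n,
        is_rooted_tree parT -> is_binary parT -> top_minor parT parU)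
  /\
  (* NCA labeling scheme with labels of at most ceil(1.894 log2 n) bits *)
  (exists dec : seq bool -> seq bool -> seq bool,
      forall parT : 'I_n -> option 'I_n,
        is_rooted_tree parT -> is_binary parT ->
        exists lab : 'I_n -> seq bool,
          injective lab /\
          (forall u, (Z.of_nat (size (lab u)) <= Rceil (1.894 * log2 (INR n)))%Z) /\
          (forall u v w, is_nca parT u v w -> dec (lab u) (lab v) = lab w)).
Proof.
move=> n n_gt0; split.
  by have [m [parU [rooted size_m minor]]] := utree_top_minor n_gt0; exists m, parU.
have [dec dec_ok] := utree_nca_labeling n_gt0.
exists dec => parT parT_tree parT_bin.
by have [lab [lab_inj lab_size lab_nca]] := dec_ok parT parT_tree parT_bin; exists lab.
Qed.
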